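(* For real $\kappa\ge0$ and $U$ define \begin{align*} A(\kappa,U)&=2(1+\kappa^2)-U(\kappa^2-1),\\ B(\kappa,U)&=\kappa^2U^2+4U+2(1+\kappa^2),\\ C(\kappa,U)&=-\kappa^2U^3+2U^2+(2\kappa^2+6)U. \end{align*} Then $A(\kappa,U)=0$ holds if and only if $\kappa\neq1$ and $U=U_c(\kappa):=\frac{2(\kappa^2+1)}{\kappa^2-1}$, and $A(\kappa,U)=B(\kappa,U)=0$ holds if and only if $$\kappa^2=\kappa_t^2:=\frac{\sqrt{13}-2}{3}\qquad\text{and}\qquad U=U_t:=\frac{2(\kappa_t^2+1)}{\kappa_t^2-1}\ (\approx-6.61).$$ Moreover $C(\kappa_t,U_t)>0$.
   Context: $A,B,C$ are the Landau coefficients (on resonance, $\omega_a=\omega_c=1$) in the expansion $\delta(n)=An+Bn^2+Cn^3+O(n^4)$ of the reduced pump distance to threshold $\delta=4\lambda^2-(1+\kappa^2)$ as a function of the photon number $n=|\alpha|^2$ along superradiant steady states of the mean-field dissipative quantum Rabi model with Kerr nonlinearity $U=2KN/\omega_c$ and cavity decay rate $\kappa$ (in units of $\omega_c$). The point $A=B=0$ is the tricritical point. *)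

From Stdlib Require Import Reals Lra.
Open Scope R_scope.

Definition coefA (k U : R) : R := 2 * (1 + k ^ 2) - U * (k ^ 2 - 1).
Definition coefB (k U : R) : R := k ^ 2 * U ^ 2 + 4 * U + 2 * (1 + k ^ 2).
Definition coefC (k U : R) : R := - k ^ 2 * U ^ 3 + 2 * U ^ 2 + (2 * k ^ 2 + 6) * U.

Definition Uc (k : R) : R := 2 * (k ^ 2 + 1) / (k ^ 2 - 1).

Definition kt2 : R := (sqrt 13 - 2) / 3.
Definition kt : R := sqrt kt2.
Definition Ut : R := 2 * (kt2 + 1) / (kt2 - 1).

(** Write x = κ².  [A] is affine in [U], so [A = 0] pins [U] to [U_c(κ)] as
    soon as x ≠ 1.  Substituting [U_c] into [B] and clearing the denominator
    (x - 1)² leaves 2(x + 1)(3x² + 4x - 3), whose only nonnegative root is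
    κ_t².  Finally [C = U (6U + 4x + 8) - U B]; at the tricritical point [B]
    vanishes and κ_t² > 1/2 forces [U_t < -6], so both factors of the first
    term are negative. *)

From Stdlib Require Import Reals Lra.
Open Scope R_scope.

Lemma pow2_eq1_nonneg (k : R) : 0 <= k -> (k ^ 2 = 1 <-> k = 1).
Proof. intro Hk; split; [nra | intros ->; ring]. Qed.

Lemma coefA_eq0_iff (k U : R) : coefA k U = 0 <-> k ^ 2 <> 1 /\ U = Uc k.
Proof.
  unfold coefA, Uc; split.
  - intro HA.
    assert (Hk : k ^ 2 <> 1) by (intro E; rewrite E in HA; lra).
    split; [exact Hk |].
    apply (Rmult_eq_reg_r (k ^ 2 - 1)); [| lra].
    field_simplify; lra.
  - intros [Hk ->]. field; lra.
Qed.

Lemma coefB_Uc (k : R) : k ^ 2 <> 1 ->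
  (k ^ 2 - 1) ^ 2 * coefB k (Uc k) =
  2 * (k ^ 2 + 1) * (3 * (k ^ 2) ^ 2 + 4 * k ^ 2 - 3).
Proof. intro Hk; unfold coefB, Uc; field; lra. Qed.

Lemma coefC_split (k U : R) :
  coefC k U = U * (6 * U + 4 * k ^ 2 + 8) - U * coefB k U.
Proof. unfold coefC, coefB; ring. Qed.

Lemma sqrt13_bounds : 7 / 2 < sqrt 13 < 5.
Proof.
  assert (H13 : sqrt 13 * sqrt 13 = 13) by (apply sqrt_sqrt; lra).
  pose proof (sqrt_pos 13).
  split; nra.
Qed.

Lemma kt2_bounds : 1 / 2 < kt2 < 1.
Proof. unfold kt2; pose proof sqrt13_bounds; lra. Qed.

Lemma kt2_root_iff (x : R) : 0 <= x -> (3 * x ^ 2 + 4 * x - 3 = 0 <-> x = kt2).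
Proof.
  intro Hx.
  assert (H13 : sqrt 13 * sqrt 13 = 13) by (apply sqrt_sqrt; lra).
  pose proof sqrt13_bounds as H13b.
  (* 3 (3x² + 4x - 3) = (3x - (√13 - 2)) (3x + √13 + 2) *)
  unfold kt2; split; intro Hroot; [| subst x]; nra.
Qed.

Lemma coefAB_eq0_iff (k U : R) : 0 <= k ->
  (coefA k U = 0 /\ coefB k U = 0 <-> k ^ 2 = kt2 /\ U = Uc k).
Proof.
  intro Hk.
  assert (Hx : 0 <= k ^ 2) by nra.
  rewrite coefA_eq0_iff; split.
  - intros [[Hk1 ->] HB].
    pose proof (coefB_Uc k Hk1) as E.
    rewrite HB, Rmult_0_r in E.
    apply eq_sym, Rmult_integral in E as [E | E]; [lra |].
    split; [apply kt2_root_iff |]; easy.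
  - intros [Hk2 ->].
    pose proof kt2_bounds.
    assert (Hk1 : k ^ 2 <> 1) by lra.
    repeat split; try easy.
    pose proof (coefB_Uc k Hk1) as E.
    rewrite Hk2, (proj2 (kt2_root_iff kt2 ltac:(lra)) eq_refl), Rmult_0_r, <- Hk2 in E.
    apply Rmult_integral in E as [E | E]; [| exact E].
    exfalso; revert E; apply pow_nonzero; lra.
Qed.

Lemma kt_sq : kt ^ 2 = kt2.
Proof. unfold kt; rewrite pow2_sqrt; [| pose proof kt2_bounds]; lra. Qed.

Lemma Ut_lt : Ut < -6.
Proof.
  pose proof kt2_bounds.
  assert (HU : Ut * (kt2 - 1) = 2 * (kt2 + 1)) by (unfold Ut; field; lra).
  nra.
Qed.

Theorem mainTheorem6 :
  (forall k U : R, 0 <= k ->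
     (coefA k U = 0 <-> (k <> 1 /\ U = Uc k))) /\
  (forall k U : R, 0 <= k ->
     ((coefA k U = 0 /\ coefB k U = 0) <-> (k ^ 2 = kt2 /\ U = Ut))) /\
  coefC kt Ut > 0.
Proof.
  assert (Uc_kt2 : forall k, k ^ 2 = kt2 -> Uc k = Ut)
    by (intros k Hk; unfold Uc, Ut; rewrite Hk; reflexivity).
  split; [| split].
  - intros k U Hk. rewrite coefA_eq0_iff, (pow2_eq1_nonneg k Hk). reflexivity.
  - intros k U Hk. rewrite (coefAB_eq0_iff k U Hk).
    split; intros [Hk2 ->]; rewrite ?(Uc_kt2 k Hk2); auto.
  - assert (HB : coefB kt Ut = 0).
    { rewrite <- (Uc_kt2 kt kt_sq).
      apply (coefAB_eq0_iff kt); [apply sqrt_pos | split; [exact kt_sq | reflexivity]]. }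
    rewrite coefC_split, HB, kt_sq.
    pose proof kt2_bounds; pose proof Ut_lt; nra.
Qed.
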